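(* Let $\{R_\alpha\}$ be a collection of rings. Then the direct product $R=\prod_\alpha R_\alpha$ is weakly $r$-clean if and only if each $R_\alpha$ is weakly $r$-clean and at most one $R_\alpha$ is not $r$-clean.
   Context: Rings are associative with identity. $Idem(R)$ denotes the idempotents and $Reg(R)=\{r\in R: r=ryr \text{ for some } y\in R\}$ the regular elements of $R$. A ring is $r$-clean if every element is of the form $r+e$ with $r\in Reg(R)$, $e\in Idem(R)$. An element $x$ is weakly $r$-clean if $x=r+e$ or $x=r-e$ for some $r\in Reg(R)$, $e\in Idem(R)$; a ring is weakly $r$-clean if all its elements are. *)

From HB Require Import structures.
From mathcomp Require Import all_boot all_order all_algebra.
From mathcomp Require Import boolp.
From Stdlib Require Import FunctionalExtensionality.

Set Implicit Arguments.
Unset Strict Implicit.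
Unset Printing Implicit Defensive.
Import GRing.Theory.
Local Open Scope ring_scope.

(* Rings: associative with identity, not necessarily commutative;
   the zero ring is allowed (pzRingType). *)

Definition is_idem (R : pzRingType) (e : R) : Prop := e * e = e.
Definition is_reg (R : pzRingType) (r : R) : Prop := exists y : R, r = r * y * r.

Definition r_clean_elt (R : pzRingType) (x : R) : Prop :=
  exists r e : R, is_reg r /\ is_idem e /\ x = r + e.
Definition r_clean_ring (R : pzRingType) : Prop := forall x : R, r_clean_elt x.

Definition weakly_r_clean_elt (R : pzRingType) (x : R) : Prop :=
  exists r e : R, is_reg r /\ is_idem e /\ (x = r + e \/ x = r - e).
Definition weakly_r_clean_ring (R : pzRingType) : Prop :=
  forall x : R, weakly_r_clean_elt x.

Definition dprod (I : Type) (R : I -> pzRingType) : Type := forall i, R i.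

Section DProd.
Variables (I : Type) (R : I -> pzRingType).
Local Notation P := (dprod R).

HB.instance Definition _ := gen_eqMixin P.
HB.instance Definition _ := gen_choiceMixin P.

Definition dp_zero : P := fun i => 0.
Definition dp_opp (f : P) : P := fun i => - f i.
Definition dp_add (f g : P) : P := fun i => f i + g i.
Definition dp_one : P := fun i => 1.
Definition dp_mul (f g : P) : P := fun i => f i * g i.

Ltac dpext := move=> *; apply: functional_extensionality_dep => i.

Lemma dp_addA : associative dp_add. Proof. by dpext; rewrite /dp_add addrA. Qed.
Lemma dp_addC : commutative dp_add. Proof. by dpext; rewrite /dp_add addrC. Qed.
Lemma dp_add0 : left_id dp_zero dp_add. Proof. by dpext; rewrite /dp_add add0r. Qed.
Lemma dp_addN : left_inverse dp_zero dp_opp dp_add.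
Proof. by dpext; rewrite /dp_add /dp_opp addNr. Qed.

HB.instance Definition _ :=
  GRing.isZmodule.Build P dp_addA dp_addC dp_add0 dp_addN.

Lemma dp_mulA : associative dp_mul. Proof. by dpext; rewrite /dp_mul mulrA. Qed.
Lemma dp_mul1 : left_id dp_one dp_mul. Proof. by dpext; rewrite /dp_mul mul1r. Qed.
Lemma dp_mulr1 : right_id dp_one dp_mul. Proof. by dpext; rewrite /dp_mul mulr1. Qed.
Lemma dp_mulDl : left_distributive dp_mul +%R.
Proof. by dpext; rewrite /dp_mul /= /dp_add mulrDl. Qed.
Lemma dp_mulDr : right_distributive dp_mul +%R.
Proof. by dpext; rewrite /dp_mul /= /dp_add mulrDr. Qed.

HB.instance Definition _ :=
  GRing.Zmodule_isPzRing.Build P dp_mulA dp_mul1 dp_mulr1 dp_mulDl dp_mulDr.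

End DProd.

(* Since x = r - e iff -x = (-r) + e, and -r is regular when r is, an element
   is weakly r-clean iff x or -x is r-clean.  In a product r-cleanness is
   coordinatewise: projections are ring morphisms, and decompositions of the
   coordinates glue by choice.  If every factor except possibly R_i0 is
   r-clean, the sign is dictated by the weakly r-clean coordinate x_i0.
   Conversely, if a in R_i and b in R_j (i <> j) are not r-clean, the element
   with a at i and -b at j is not weakly r-clean. *)

From HB Require Import structures.
From mathcomp Require Import all_boot all_order all_algebra.
From mathcomp Require Import boolp.

Set Implicit Arguments.
Unset Strict Implicit.
Unset Printing Implicit Defensive.
Import GRing.Theory.
Local Open Scope ring_scope.

Lemma dep_choice (I : Type) (T : I -> Type) (Q : forall i, T i -> Prop) :
  (forall i, exists a : T i, Q i a) -> exists f : forall i, T i, forall i, Q i (f i).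
Proof. by move=> H; exists (fun i => sval (cid (H i))) => i; apply: svalP. Qed.

Section WeaklyRClean.
Variable S : pzRingType.

Lemma is_regN (r : S) : is_reg r -> is_reg (- r).
Proof. by case=> y hy; exists (- y); rewrite mulrNN mulrN -hy. Qed.

Lemma weakly_r_clean_eltE (x : S) :
  weakly_r_clean_elt x <-> r_clean_elt x \/ r_clean_elt (- x).
Proof.
split=> [[r [e [hr [he [->|->]]]]]|[[r [e [hr [he ->]]]]|[r [e [hr [he hx]]]]]].
- by left; exists r, e.
- by right; exists (- r), e; rewrite opprB addrC; split=> //; exact: is_regN.
- by exists r, e; split; [|split; [|left]].
- exists (- r), e; split; [exact: is_regN | split=> //].
  by right; rewrite -[x]opprK hx opprD.
Qed.

End WeaklyRClean.

Section RMorphism.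
Variables (S T : pzRingType) (f : {rmorphism S -> T}).

Lemma is_reg_rmorph (r : S) : is_reg r -> is_reg (f r).
Proof. by case=> y hy; exists (f y); rewrite -!rmorphM -hy. Qed.

Lemma is_idem_rmorph (e : S) : is_idem e -> is_idem (f e).
Proof. by rewrite /is_idem -rmorphM => ->. Qed.

Lemma r_clean_elt_rmorph (x : S) : r_clean_elt x -> r_clean_elt (f x).
Proof.
case=> r [e [hr [he ->]]]; exists (f r), (f e); rewrite rmorphD.
by split; [exact: is_reg_rmorph | split=> //; exact: is_idem_rmorph].
Qed.

End RMorphism.

Section DirectProduct.
Variables (I : Type) (R : I -> pzRingType).
Local Notation P := (dprod R).

Definition dp_proj (i : I) (f : P) : R i := f i.

Lemma dp_proj_is_zmod_morphism i : zmod_morphism (dp_proj i).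
Proof. by []. Qed.

Lemma dp_proj_is_monoid_morphism i : monoid_morphism (dp_proj i).
Proof. by []. Qed.

HB.instance Definition _ i :=
  GRing.isZmodMorphism.Build P (R i) (dp_proj i) (dp_proj_is_zmod_morphism i).
HB.instance Definition _ i :=
  GRing.isMonoidMorphism.Build P (R i) (dp_proj i) (dp_proj_is_monoid_morphism i).

Lemma dp_oppE (f : P) i : (- f) i = - f i.
Proof. by []. Qed.

Lemma r_clean_elt_proj (x : P) i : r_clean_elt x -> r_clean_elt (x i).
Proof. exact: (r_clean_elt_rmorph (dp_proj i)). Qed.

Definition dp_set (f : P) (i : I) (a : R i) : P := fun k =>
  if pselect (i = k) is left eik then eq_rect i R a k eik else f k.

Lemma dp_set_id (f : P) i (a : R i) : dp_set f a i = a.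
Proof. by rewrite /dp_set; case: pselect => // e; rewrite (Prop_irrelevance e erefl). Qed.

Lemma dp_set_ne (f : P) i (a : R i) k : i <> k -> dp_set f a k = f k.
Proof. by rewrite /dp_set; case: pselect. Qed.

Lemma r_clean_elt_dprod (x : P) : (forall i, r_clean_elt (x i)) -> r_clean_elt x.
Proof.
move=> H.
pose decomp i (t : R i * R i * R i) :=
  [/\ t.1.1 = t.1.1 * t.2 * t.1.1, is_idem t.1.2 & x i = t.1.1 + t.1.2].
have [t Ht] : exists t : forall i, R i * R i * R i, forall i, decomp i (t i).
  by apply: dep_choice => i; have [r [e [[y hy] [he hx]]]] := H i; exists (r, e, y).
exists (fun i => (t i).1.1), (fun i => (t i).1.2).
split; [exists (fun i => (t i).2) | split];
  by apply: functional_extensionality_dep => i; case: (Ht i).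
Qed.

Lemma weakly_r_clean_ring_proj :
  weakly_r_clean_ring P -> forall i, weakly_r_clean_ring (R i).
Proof.
move=> H i a; apply/weakly_r_clean_eltE.
have /weakly_r_clean_eltE [/(r_clean_elt_proj i)|/(r_clean_elt_proj i)] :=
  H (dp_set 0 a).
- by rewrite dp_set_id; left.
- by rewrite dp_oppE dp_set_id; right.
Qed.

Lemma not_r_clean_dprod_unique : weakly_r_clean_ring P ->
  forall i j, ~ r_clean_ring (R i) -> ~ r_clean_ring (R j) -> i = j.
Proof.
move=> H i j /existsNP [a na] /existsNP [b nb]; apply: contrapT => nij.
have /weakly_r_clean_eltE [] := H (dp_set (dp_set 0 (- b)) a).
- by move=> /(r_clean_elt_proj i); rewrite dp_set_id.
- by move=> /(r_clean_elt_proj j); rewrite dp_oppE dp_set_ne // dp_set_id opprK.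
Qed.

Lemma weakly_r_clean_dprod : (forall i, weakly_r_clean_ring (R i)) ->
    (forall i j, ~ r_clean_ring (R i) -> ~ r_clean_ring (R j) -> i = j) ->
  weakly_r_clean_ring P.
Proof.
move=> Hw Hu x; apply/weakly_r_clean_eltE.
have [[i0 ni0]|all_clean] := pselect (exists i0, ~ r_clean_ring (R i0)); last first.
  left; apply: r_clean_elt_dprod => k.
  by apply: contrapT => nk; apply: all_clean; exists k => /(_ (x k)).
have clean_off k : k <> i0 -> r_clean_ring (R k).
  by move=> nk; apply: contrapT => /Hu /(_ ni0).
have /weakly_r_clean_eltE [] := Hw i0 (x i0) => [xi0|Nxi0]; [left | right];
  apply: r_clean_elt_dprod => k; have [->|nk] := pselect (k = i0) => //;
  exact: clean_off.
Qed.

End DirectProduct.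

Theorem theorem2p3 (I : Type) (R : I -> pzRingType) :
  weakly_r_clean_ring (dprod R) <->
  ((forall i, weakly_r_clean_ring (R i)) /\
   (forall i j, ~ r_clean_ring (R i) -> ~ r_clean_ring (R j) -> i = j)).
Proof.
split=> [H | [Hw Hu]]; last exact: weakly_r_clean_dprod.
by split; [exact: weakly_r_clean_ring_proj | exact: not_r_clean_dprod_unique].
Qed.
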